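(* Let $K=(V,E)$ be a complete graph, $r:V\to\mathbb{Z}_+$ and $F\subseteq V$. Fix an ordering of $F$ by non-increasing $r$-value and an ordering of $V\setminus F$ by non-increasing $r$-value. Then there exist $k\in\{0,\dots,|F|\}$ and $\ell\in\{0,\dots,|V|-|F|\}$ such that the union of the first $k$ vertices of $F$ and the first $\ell$ vertices of $V\setminus F$ (in these orderings) is a minimum-size vector connectivity set for $(K,F,r)$.
   Context: For a vertex $v$ and a set $U\subseteq V$, a $v$--$U$ fan of order $k$ is a collection of $k$ paths, each connecting $v$ to a vertex of $U$, pairwise vertex-disjoint except at $v$ (if $v\in U$, the trivial one-vertex path $(v)$ may be one of them); $v$ is $k$-linked to $U$ if such a fan exists. A vector connectivity set for $(K,F,r)$ is a set $S\subseteq V$ such that every $v\in V\setminus S$ is $r(v)$-linked to $S\cup F$. *)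

From mathcomp Require Import all_boot.
Set Implicit Arguments. Unset Strict Implicit. Unset Printing Implicit Defensive.

Section VC.
Variable V : finType.

Definition complete_graph : rel V := fun x y => x != y.

(* The trivial path (v)
   corresponds to s = [::] and ends in U iff v \in U. *)
Definition vpath_to (e : rel V) (v : V) (U : {set V}) (s : seq V) : bool :=
  [&& path e v s, uniq (v :: s) & last v s \in U].

Definition fan (e : rel V) (v : V) (U : {set V}) (k : nat)
  (P : 'I_k -> seq V) : Prop :=
  (forall i, vpath_to e v U (P i)) /\
  (forall i j, i != j -> P i != P j /\ [disjoint P i & P j]).

Definition linked (e : rel V) (v : V) (U : {set V}) (k : nat) : Prop :=
  exists P : 'I_k -> seq V, @fan e v U k P.

Definition vc_set (e : rel V) (F : {set V}) (r : V -> nat) (S : {set V})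
  : Prop :=
  forall v, v \notin S -> linked e v (S :|: F) (r v).

Definition min_vc_set (e : rel V) (F : {set V}) (r : V -> nat)
  (S : {set V}) : Prop :=
  vc_set e F r S /\ (forall S', vc_set e F r S' -> #|S| <= #|S'|).

Definition r_ordering (r : V -> nat) (A : {set V}) (s : seq V) : bool :=
  [&& uniq s, perm_eq s (enum A) & sorted (fun x y => r y <= r x) s].

End VC.

From mathcomp Require Import all_boot.
Set Implicit Arguments. Unset Strict Implicit.

(* In the complete graph, v is k-linked to U exactly when k <= |U| (the edges
   from v to the vertices of U form a fan), so S is a vector connectivity set
   iff r v <= |S ∪ F| for every v outside S.  Fix a minimum such S0 and put
   t = |S0 ∪ F|; every vertex with r > t lies in S0.  Taking the vertices of
   F with r > t (a prefix of the ordering of F) together with the first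
   |S0 \ F| vertices of V \ F gives a set S with |S| <= |S0| and |S ∪ F| >= t,
   and by sortedness every vertex left outside S has r <= t. *)

Section CompleteGraphFans.
Variable V : finType.
Implicit Types (v : V) (U : {set V}).

Lemma linked_card (e : rel V) v U k : linked e v U k -> k <= #|U|.
Proof.
case=> P [P_path P_disj]; pose f i := last v (P i).
have f_in i : P i != [::] -> f i \in P i.
  by rewrite /f; case: (P i) => //= a s _; apply: mem_last.
have f_neq_v i : P i != [::] -> f i != v.
  move=> /f_in fP; apply: contraTneq fP => ->.
  by have /and3P[_ /andP[] ] := P_path i.
have f_inj : injective f.
  move=> i j fij; apply/eqP/negPn/negP => nij.
  have [nPij dPij] := P_disj i j nij.
  have [Pi0 | Pi] := eqVneq (P i) [::]; have [Pj0 | Pj] := eqVneq (P j) [::].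
  - by rewrite Pi0 Pj0 eqxx in nPij.
  - by have := f_neq_v j Pj; rewrite -fij /f Pi0 eqxx.
  - by have := f_neq_v i Pi; rewrite fij /f Pj0 eqxx.
  - by have := disjointFr dPij (f_in i Pi); rewrite fij f_in.
rewrite -[k]card_ord -(card_imset _ f_inj) subset_leq_card //.
by apply/subsetP => _ /imsetP[i _ ->]; have /and3P[] := P_path i.
Qed.

Lemma complete_linked v U k : k <= #|U| -> linked (@complete_graph V) v U k.
Proof.
move=> kU; pose spoke u := if u == v then [::] else [:: u].
have mem_spoke u z : z \in spoke u -> z = u.
  by rewrite /spoke; case: eqP => // _; rewrite inE => /eqP.
have spoke_inj : injective spoke.
  move=> u w; rewrite /spoke.
  by case: eqP => [-> | _]; case: eqP => [-> | _] // [].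
have spoke_path u : u \in U -> vpath_to (@complete_graph V) v U (spoke u).
  rewrite /vpath_to /spoke /complete_graph.
  by case: eqP => [-> | /eqP uv] uU //=; rewrite inE uU !andbT eq_sym uv.
have ltU (i : 'I_k) : i < #|U| by apply: leq_trans kU.
exists (fun i => spoke (enum_val (Ordinal (ltU i)))); split.
  by move=> i; apply/spoke_path/enum_valP.
move=> i j nij.
have uij : enum_val (Ordinal (ltU i)) != enum_val (Ordinal (ltU j)).
  by rewrite (inj_eq enum_val_inj).
split; first by rewrite (inj_eq spoke_inj).
rewrite disjoint_has; apply/hasPn => z /mem_spoke ->.
by apply: contra uij => /mem_spoke ->.
Qed.

Lemma vc_set_completeP (F : {set V}) (r : V -> nat) (S : {set V}) :
  reflect (vc_set (@complete_graph V) F r S)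
          [forall v, (v \notin S) ==> (r v <= #|S :|: F|)].
Proof.
apply: (iffP forallP) => [vcS v vS | vcS v].
  by apply: complete_linked; move/implyP: (vcS v); apply.
by apply/implyP => /vcS /linked_card.
Qed.

End CompleteGraphFans.

Section SortedPrefix.
Variables (T : finType) (r : T -> nat) (s : seq T).
Hypotheses (s_uniq : uniq s) (s_sorted : sorted (fun x y => r y <= r x) s).

Lemma sorted_take_index_le v x :
  v \in s -> x \in take (index v s).+1 s -> r v <= r x.
Proof.
move=> vs xt; have xs := mem_take xt.
have le_trans : transitive (fun x y => r y <= r x).
  by move=> b a c ba cb; apply: leq_trans cb ba.
have := sorted_leq_nth le_trans (fun=> leqnn _) x s_sorted (index x s) (index v s).
by rewrite !inE !index_mem !nth_index //; apply=> //; apply: index_ltn xt.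
Qed.

Lemma notin_take_card_le (A : {set T}) t v :
  {in s, forall x, t < r x -> x \in A} ->
  v \in s -> v \notin take #|A| s -> r v <= t.
Proof.
move=> highA vs; apply: contraR; rewrite -ltnNge => tv.
have prefixA : {subset take (index v s).+1 s <= enum A}.
  move=> x xt; rewrite mem_enum highA ?(mem_take xt) //.
  exact: leq_trans tv (sorted_take_index_le vs xt).
have := uniq_leq_size (take_uniq _ s_uniq) prefixA.
by rewrite size_takel ?index_mem // -cardE in_take.
Qed.

End SortedPrefix.

Lemma r_ordering_mem (V : finType) (r : V -> nat) (A : {set V}) s :
  r_ordering r A s -> s =i A.
Proof. by case/and3P=> _ /perm_mem sA _ x; rewrite sA mem_enum. Qed.

Lemma r_ordering_size (V : finType) (r : V -> nat) (A : {set V}) s :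
  r_ordering r A s -> size s = #|A|.
Proof. by case/and3P=> _ /perm_size -> _; rewrite cardE. Qed.

Section PrefixSolution.
Variables (V : finType) (r : V -> nat) (F : {set V}) (sF sN : seq V).
Hypotheses (sF_ord : r_ordering r F sF) (sN_ord : r_ordering r (~: F) sN).
Variable S0 : {set V}.
Hypothesis S0_vc : vc_set (@complete_graph V) F r S0.

Let t := #|S0 :|: F|.
Let highF := [set x in F | t < r x].
Let S0N := S0 :\: F.
Let S := [set x in take #|highF| sF ++ take #|S0N| sN].

Lemma high_in_S0 x : t < r x -> x \in S0.
Proof.
apply: contraTT => xS0; rewrite -leqNgt.
by move/vc_set_completeP/forallP/(_ x)/implyP: S0_vc; apply.
Qed.

Lemma card_prefix_le : #|S| <= #|S0|.
Proof.
have highF_le : #|highF| <= #|S0 :&: F|.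
  by apply/subset_leq_card/subsetP => x; rewrite !inE => /andP[-> /high_in_S0 ->].
rewrite cardsE (leq_trans (card_size _)) // size_cat -(cardsID F S0) !size_take_min.
exact: leq_add (leq_trans (geq_minl _ _) highF_le) (geq_minl _ _).
Qed.

Lemma card_S0N_le : #|S0N| <= #|~: F|.
Proof. exact/subset_leq_card/subsetDr. Qed.

Lemma card_prefixU_ge : t <= #|S :|: F|.
Proof.
have -> : t = #|S0N| + #|F|.
  by rewrite /t setUC -(cardsID F) setUK setDUl setDv set0U addnC.
pose N := [set x in take #|S0N| sN].
have cardN : #|N| = #|S0N|.
  case/and3P: sN_ord => sN_uniq _ _.
  by rewrite cardsE (card_uniqP (take_uniq _ sN_uniq)) size_takel // (r_ordering_size sN_ord) card_S0N_le.
have NF0 : N :&: F = set0.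
  apply/setP => x; rewrite !inE; apply/negbTE/andP => -[/mem_take].
  by rewrite (r_ordering_mem sN_ord) inE => /negbTE ->.
rewrite -cardN -[_ + _]subn0 -(cards0 V) -NF0 -cardsU subset_leq_card //.
by apply/setSU/subsetP => x; rewrite !inE mem_cat => ->; rewrite orbT.
Qed.

Lemma prefix_vc_set : vc_set (@complete_graph V) F r S.
Proof.
apply/vc_set_completeP/forallP => v; apply/implyP.
rewrite inE mem_cat negb_or => /andP[vtF vtN].
apply: leq_trans card_prefixU_ge.
case/and3P: (sF_ord) => sF_uniq _ sF_sorted.
case/and3P: (sN_ord) => sN_uniq _ sN_sorted.
have [vF | vF] := boolP (v \in F).
- apply: (notin_take_card_le sF_uniq sF_sorted _ _ vtF).
    by move=> x xs tx; rewrite inE -(r_ordering_mem sF_ord) xs.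
  by rewrite (r_ordering_mem sF_ord).
- apply: (notin_take_card_le sN_uniq sN_sorted _ _ vtN).
    move=> x xs tx; rewrite inE high_in_S0 // andbT.
    by move: xs; rewrite (r_ordering_mem sN_ord) inE.
  by rewrite (r_ordering_mem sN_ord) inE.
Qed.

Lemma exists_prefix_vc_set : exists k l, k <= #|F| /\ l <= #|V| - #|F| /\
  vc_set (@complete_graph V) F r [set x in take k sF ++ take l sN] /\
  #|[set x in take k sF ++ take l sN]| <= #|S0|.
Proof.
exists #|highF|, #|S0N|; split.
  by apply/subset_leq_card/subsetP => x; rewrite inE => /andP[].
split; first by rewrite -(cardsC F) addKn card_S0N_le.
by split; [exact: prefix_vc_set | exact: card_prefix_le].
Qed.

End PrefixSolution.

Theorem mainTheorem9 (V : finType) (r : V -> nat) (F : {set V})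
  (sF sN : seq V) :
  r_ordering r F sF -> r_ordering r (~: F) sN ->
  exists k l, k <= #|F| /\ l <= #|V| - #|F| /\
    min_vc_set (@complete_graph V) F r [set x in take k sF ++ take l sN].
Proof.
move=> sF_ord sN_ord.
pose vcb (S : {set V}) := [forall v, (v \notin S) ==> (r v <= #|S :|: F|)].
have vcT : vcb setT by apply/forallP => v; rewrite inE.
case: (arg_minnP (fun S : {set V} => #|S|) vcT) => S0 /vc_set_completeP S0_vc S0_min.
have [k [l [kF [lN [vcS cardS]]]]] := exists_prefix_vc_set sF_ord sN_ord S0_vc.
exists k, l; do 3!split => //.
by move=> S' /vc_set_completeP /S0_min; apply: leq_trans cardS.
Qed.
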